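(* For each $n\geq1$, $x-1$ divides $T_{1,n}(x,y)$ and $(x-1)^2$ divides $T_{0,n}(x,y)$ in $\mathbb{Z}[x,y]$.
   Context: Graphs are finite; multiple edges are allowed. For a graph $G$, a spanning subgraph $A$ has vertex set $V(G)$ and edge set $E(A)\subseteq E(G)$; $k(A)$ is its number of connected components, $r(A)=|V(G)|-k(A)$, $n(A)=|E(A)|-r(A)$; the weight of $A$ is $(x-1)^{r(G)-r(A)}(y-1)^{n(A)}$. Sierpiński graphs $\Gamma_n$ ($n\ge1$), each with three outmost vertices top, left, right: $\Gamma_1$ is the triangle $K_3$ with its three vertices as top, left, right; $\Gamma_{n+1}$ is obtained from three disjoint copies $G_1,G_2,G_3$ of $\Gamma_n$ by identifying left$(G_1)$ with top$(G_2)$, right$(G_1)$ with top$(G_3)$, right$(G_2)$ with left$(G_3)$; its outmost vertices are top$(G_1)$, left$(G_2)$, right$(G_3)$. $T_{1,n}(x,y)$ is the sum of the weights (with $G=\Gamma_n$) of the spanning subgraphs of $\Gamma_n$ in which the left and right outmost vertices lie in the same component and the top one lies in a different component; $T_{0,n}(x,y)$ is the sum over spanning subgraphs in which the three outmost vertices lie in three distinct components. *)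

From HB Require Import structures.
From mathcomp Require Import all_boot all_order all_algebra.
Set Implicit Arguments. Unset Strict Implicit. Unset Printing Implicit Defensive.
Import GRing.Theory.

(* Vertices are 0 .. nv-1; edges are a list of (unordered) endpoint pairs,
   so multiple edges are allowed; edge i is the i-th list element. *)
Record mgraph := MG {
  nv : nat;
  edges : seq (nat * nat);
  vtop : nat; vleft : nat; vright : nat }.

Definition triangle : mgraph := MG 3 [:: (0, 1); (1, 2); (0, 2)] 0 1 2.

(* Gluing three copies G1, G2, G3 of G.  Vertex v of copy j (j = 0,1,2 for
   G1,G2,G3) gets raw label j*N + v; the identification sigma maps
   top(G2) to left(G1), top(G3) to right(G1), left(G3) to right(G2). *)
Definition glue (G : mgraph) : mgraph :=
  let N := nv G in
  let sigma (x : nat) : nat :=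
    if x == N + vtop G then vleft G
    else if x == 2 * N + vtop G then vright G
    else if x == 2 * N + vleft G then N + vright G
    else x in
  let vs := undup (map sigma (iota 0 (3 * N))) in
  let relab (x : nat) : nat := index (sigma x) vs in
  let cp (j : nat) :=
    map (fun e : nat * nat => (relab (j * N + e.1), relab (j * N + e.2)))
        (edges G) in
  MG (size vs) (cp 0 ++ cp 1 ++ cp 2)
     (relab (vtop G)) (relab (N + vleft G)) (relab (2 * N + vright G)).

(* Sierpinski graph Gamma_n (meaningful for n >= 1). *)
Definition Gamma (n : nat) : mgraph := iter n.-1 glue triangle.

Section Spanning.
Variable G : mgraph.

(* spanning subgraphs = subsets of the edge (index) set *)
Definition esub := {set 'I_(size (edges G))}.

Definition adjA (A : esub) : rel 'I_(nv G) := fun u v =>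
  [exists i in A, let e := nth (0, 0) (edges G) i in
     ((e.1 == u) && (e.2 == v)) || ((e.2 == u) && (e.1 == v))].

Definition sameComp (A : esub) (u v : nat) : bool :=
  [exists a : 'I_(nv G), exists b : 'I_(nv G),
     [&& (a == u :> nat), (b == v :> nat) & connect (adjA A) a b]].

Definition kcomp (A : esub) : nat :=
  #|[set [set w | connect (adjA A) u w] | u : 'I_(nv G)]|.

Definition rank (A : esub) : nat := nv G - kcomp A.
Definition nullity (A : esub) : nat := #|A| - rank A.

(* Z[x,y] as {poly {poly int}}: x is the outer variable, y the inner one. *)
Definition Zxy := {poly {poly int}}.
Definition xv : Zxy := 'X%R.
Definition yv : Zxy := (('X)%:P)%R.

Definition weight (A : esub) : Zxy :=
  ((xv - 1) ^+ (rank setT - rank A) * (yv - 1) ^+ (nullity A))%R.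

Definition T1sum : Zxy := (\sum_(A : esub | sameComp A (vleft G) (vright G)
                   && ~~ sameComp A (vtop G) (vleft G)) weight A)%R.

Definition T0sum : Zxy := (\sum_(A : esub | [&& ~~ sameComp A (vtop G) (vleft G),
                      ~~ sameComp A (vtop G) (vright G) &
                      ~~ sameComp A (vleft G) (vright G)]) weight A)%R.
End Spanning.

Definition T1 (n : nat) : Zxy := T1sum (Gamma n).
Definition T0 (n : nat) : Zxy := T0sum (Gamma n).

(* The weight of a spanning subgraph A carries the factor
   (x-1)^(r(G)-r(A)) = (x-1)^(k(A)-k(G)).  In Gamma_n the three outmost vertices
   lie in one component of the whole graph, so if A separates two of them
   (resp. all three), then splitting that component costs at least one
   (resp. two) extra components: k(A) >= k(G)+1 (resp. k(G)+2).  Hence every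
   summand of T_{1,n} (resp. T_{0,n}) is divisible by x-1 (resp. (x-1)^2).
   The outmost vertices stay linked from Gamma_n to Gamma_{n+1} because each
   copy links its own corners and the gluing identifies corners of the copies. *)
From HB Require Import structures.
From mathcomp Require Import all_boot all_order all_algebra zify.
Import GRing.Theory.
Set Implicit Arguments. Unset Strict Implicit.

Section Components.
Variable G : mgraph.
Local Notation V := ('I_(nv G)).
Local Notation E := (setT : esub G).

Lemma adjA_sym (A : esub G) : symmetric (adjA A).
Proof.
move=> u v; apply/existsP/existsP => -[i /andP[Ai e_uv]]; exists i.
all: by rewrite Ai /=; case/orP: e_uv => /andP[-> ->]; rewrite ?orbT.
Qed.

Lemma connect_adjA_sub (A B : esub G) x y :
  A \subset B -> connect (adjA A) x y -> connect (adjA B) x y.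
Proof.
move=> sAB; apply: connect_sub => u v /existsP[i /andP[Ai e_uv]].
by apply: connect1; apply/existsP; exists i; rewrite (subsetP sAB) ?e_uv.
Qed.

Definition comp (A : esub G) (x : V) : {set V} := [set w | connect (adjA A) x w].

Lemma kcompE (A : esub G) : kcomp A = #|[set comp A u | u : V]|.
Proof. by []. Qed.

Lemma kcomp_le_nv (A : esub G) : kcomp A <= nv G.
Proof. by rewrite kcompE (leq_trans (leq_imset_card _ _)) ?card_ord. Qed.

Lemma comp_refl (A : esub G) x : x \in comp A x.
Proof. by rewrite inE connect0. Qed.

Lemma comp_eq (A : esub G) x y : connect (adjA A) x y -> comp A x = comp A y.
Proof.
move=> c_xy; apply/setP => w; rewrite !inE; apply/idP/idP; last exact: connect_trans.
by apply: connect_trans; rewrite (sym_connect_sym (@adjA_sym A)).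
Qed.

Lemma comp_neq (A : esub G) x y : ~~ connect (adjA A) x y -> comp A x != comp A y.
Proof. by apply: contra => /eqP cxy; have := comp_refl A y; rewrite -cxy inE. Qed.

Definition comp_closure (S : {set V}) : {set V} :=
  [set w | [exists z in S, connect (adjA E) z w]].

Lemma comp_closure_comp (A : esub G) x : comp_closure (comp A x) = comp E x.
Proof.
apply/setP => w; rewrite !inE; apply/existsP/idP; last by exists x; rewrite comp_refl.
case=> z /andP[]; rewrite inE => /(connect_adjA_sub (subsetT A)).
exact: connect_trans.
Qed.

(* Since [comp_closure] maps the components of [A] onto those of the whole
   graph, identifying all components in [D] with that of [t] loses nothing. *)
Lemma kcomp_add_card (A : esub G) (D : {set {set V}}) (t : V) :
  D \subset [set comp A u | u : V] -> comp A t \notin D ->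
  (forall x, comp A x \in D -> connect (adjA E) t x) ->
  kcomp E + #|D| <= kcomp A.
Proof.
move=> sD tD Dt; rewrite !kcompE.
have onto : [set comp E u | u : V] \subset comp_closure @: ([set comp A u | u : V] :\: D).
  apply/subsetP => _ /imsetP[x _ ->].
  have [xD | xD] := boolP (comp A x \in D).
    rewrite -(comp_eq (Dt x xD)) -(comp_closure_comp A).
    by rewrite imset_f // inE tD imset_f.
  by rewrite -(comp_closure_comp A) imset_f // inE xD imset_f.
have := leq_trans (subset_leq_card onto) (leq_imset_card _ _).
by rewrite (cardsDS sD) -(leq_add2r #|D|) subnK // subset_leq_card.
Qed.

Lemma rank_sub_ge (A : esub G) m : kcomp E + m <= kcomp A -> m <= rank E - rank A.
Proof. by rewrite /rank; have := kcomp_le_nv A; lia. Qed.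

Lemma rank_sub_ge1 (A : esub G) (t u : V) :
  connect (adjA E) t u -> ~~ connect (adjA A) t u -> 1 <= rank E - rank A.
Proof.
move=> c_tu nc_tu; apply: rank_sub_ge; rewrite -(cards1 (comp A u)).
apply: (kcomp_add_card (t := t)); first by rewrite sub1set imset_f.
  by rewrite inE comp_neq.
move=> x /set1P cxu; have := comp_refl A x; rewrite cxu inE.
by move/(connect_adjA_sub (subsetT A)); apply: connect_trans.
Qed.

Lemma rank_sub_ge2 (A : esub G) (t u v : V) :
  connect (adjA E) t u -> connect (adjA E) t v ->
  ~~ connect (adjA A) t u -> ~~ connect (adjA A) t v -> ~~ connect (adjA A) u v ->
  2 <= rank E - rank A.
Proof.
move=> c_tu c_tv nc_tu nc_tv nc_uv; apply: rank_sub_ge.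
have -> : 2 = #|[set comp A u; comp A v]| by rewrite cards2 comp_neq.
apply: (kcomp_add_card (t := t)); first by rewrite subUset !sub1set !imset_f.
  by rewrite !inE negb_or !comp_neq.
move=> x /set2P[] cx; have := comp_refl A x; rewrite cx inE;
  move/(connect_adjA_sub (subsetT A)); exact: connect_trans.
Qed.

End Components.

Section Weights.
Variable G : mgraph.
Local Notation E := (setT : esub G).
Local Open Scope ring_scope.

Lemma sum_weight_divisible (P : pred (esub G)) m :
  (forall A, P A -> (m <= rank E - rank A)%N) ->
  exists Q : Zxy, \sum_(A | P A) weight A = (xv - 1) ^+ m * Q.
Proof.
move=> gap; exists (\sum_(A | P A) (xv - 1) ^+ (rank E - rank A - m)%N * (yv - 1) ^+ nullity A).
rewrite big_distrr; apply: eq_bigr => A PA.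
by rewrite /weight /= mulrA -exprD (subnKC (gap A PA)).
Qed.

End Weights.

Definition linked (G : mgraph) (u v : nat) : bool := sameComp (G := G) setT u v.

Definition outmost_linked (G : mgraph) : bool :=
  [&& vtop G < nv G, vleft G < nv G, vright G < nv G,
      linked G (vtop G) (vleft G) & linked G (vleft G) (vright G)].

Lemma sameCompE G (A : esub G) u v (hu : u < nv G) (hv : v < nv G) :
  sameComp A u v = connect (adjA A) (Ordinal hu) (Ordinal hv).
Proof.
apply/existsP/idP => [[a /existsP[b /and3P[/eqP ua /eqP vb]]] | c_uv].
  have -> : Ordinal hu = a by apply: val_inj; rewrite /= ua.
  by have -> : Ordinal hv = b by apply: val_inj; rewrite /= vb.
by exists (Ordinal hu); apply/existsP; exists (Ordinal hv); rewrite !eqxx.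
Qed.

Section Outmost.
Variable G : mgraph.
Hypothesis linkedG : outmost_linked G.
Local Open Scope ring_scope.

Lemma T1sum_divisible : exists Q : Zxy, T1sum G = (xv - 1) * Q.
Proof.
case/and5P: linkedG => ht hl _ tl _; rewrite -[xv - 1]expr1.
apply: sum_weight_divisible => A /andP[_]; move: tl.
rewrite /linked !(sameCompE _ ht hl); exact: rank_sub_ge1.
Qed.

Lemma T0sum_divisible : exists Q : Zxy, T0sum G = (xv - 1) ^+ 2 * Q.
Proof.
case/and5P: linkedG => ht hl hr tl lr.
apply: sum_weight_divisible => A; move: tl lr.
rewrite /linked !(sameCompE _ ht hl) !(sameCompE _ ht hr) !(sameCompE _ hl hr).
move=> tl lr /and3P[]; apply: rank_sub_ge2 => //; exact: connect_trans tl lr.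
Qed.

End Outmost.

Lemma connect_homo (T T' : finType) (e : rel T) (e' : rel T') (h : T -> T') x y :
  (forall u v, e u v -> e' (h u) (h v)) -> connect e x y -> connect e' (h x) (h y).
Proof.
move=> h_e /connectP[p + ->]; elim: p x => [|z p IHp] x /=; first by rewrite connect0.
by case/andP=> /h_e e_xz /IHp; apply: connect_trans; apply: connect1.
Qed.

Lemma linked_trans G u v w : linked G u v -> linked G v w -> linked G u w.
Proof.
move=> /existsP[a /existsP[b /and3P[/eqP ua /eqP vb c_ab]]].
move=> /existsP[b' /existsP[c /and3P[/eqP vb' /eqP wc c_bc]]].
apply/existsP; exists a; apply/existsP; exists c; rewrite ua wc !eqxx /=.
by rewrite (_ : b = b') in c_ab; [apply: connect_trans c_bc | apply: val_inj; rewrite /= vb vb'].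
Qed.

Lemma linked_sym G u v : linked G u v -> linked G v u.
Proof.
move=> /existsP[a /existsP[b /and3P[ua vb c_ab]]].
apply/existsP; exists b; apply/existsP; exists a; rewrite ua vb /=.
by rewrite (sym_connect_sym (@adjA_sym G setT)).
Qed.

Lemma copy_index_lt j k n x : j < k -> x < n -> j * n + x < k * n.
Proof. nia. Qed.

Section Glue.
Variable G : mgraph.
Local Notation N := (nv G).

Definition glue_merge (x : nat) : nat :=
  if x == N + vtop G then vleft G
  else if x == 2 * N + vtop G then vright G
  else if x == 2 * N + vleft G then N + vright G
  else x.
Definition glue_labels : seq nat := undup (map glue_merge (iota 0 (3 * N))).
Definition glue_relabel (x : nat) : nat := index (glue_merge x) glue_labels.
Definition glue_copy (j : nat) : seq (nat * nat) :=
  map (fun e => (glue_relabel (j * N + e.1), glue_relabel (j * N + e.2))) (edges G).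

Lemma glueE : glue G = MG (size glue_labels) (glue_copy 0 ++ glue_copy 1 ++ glue_copy 2)
  (glue_relabel (vtop G)) (glue_relabel (N + vleft G)) (glue_relabel (2 * N + vright G)).
Proof. by []. Qed.

Lemma glue_merge_id x : x < N -> glue_merge x = x.
Proof.
by move=> xN; rewrite /glue_merge !ifN_eqC //; apply/eqP; lia.
Qed.

Lemma glue_relabel_lt x : x < 3 * N -> glue_relabel x < nv (glue G).
Proof. by move=> x3N; rewrite /glue_relabel index_mem mem_undup map_f // mem_iota. Qed.

Lemma size_edges_glue : size (edges (glue G)) = 3 * size (edges G).
Proof. by rewrite glueE /= !size_cat !size_map !mulSn mul0n addn0. Qed.

Lemma nth_edges_glue j i : j < 3 -> i < size (edges G) ->
  nth (0, 0) (edges (glue G)) (j * size (edges G) + i) =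
  (glue_relabel (j * N + (nth (0, 0) (edges G) i).1),
   glue_relabel (j * N + (nth (0, 0) (edges G) i).2)).
Proof.
move=> + iE; rewrite glueE /=.
have size_copy k : size (glue_copy k) = size (edges G) by rewrite size_map.
have nth_copy k : nth (0, 0) (glue_copy k) i =
    (glue_relabel (k * N + (nth (0, 0) (edges G) i).1),
     glue_relabel (k * N + (nth (0, 0) (edges G) i).2)) by rewrite (nth_map (0, 0)).
have skip k s m : nth (0, 0) (glue_copy k ++ s) (size (edges G) + m) = nth (0, 0) s m.
  by rewrite nth_cat size_copy ltnNge leq_addr /= addKn.
case: j => [|[|[|]]] // _.
- by rewrite mul0n add0n nth_cat size_copy iE nth_copy.
- by rewrite mul1n skip nth_cat size_copy iE nth_copy.
by rewrite mul2n -addnn -addnA !skip nth_copy mul2n -addnn.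
Qed.

Lemma linked_glue_copy j u v : j < 3 -> linked G u v ->
  linked (glue G) (glue_relabel (j * N + u)) (glue_relabel (j * N + v)).
Proof.
move=> j3 /existsP[a /existsP[b /and3P[/eqP ua /eqP vb c_ab]]].
pose h (x : 'I_N) : 'I_(nv (glue G)) :=
  Ordinal (glue_relabel_lt (copy_index_lt j3 (ltn_ord x))).
apply/existsP; exists (h a); apply/existsP; exists (h b); rewrite /= ua vb !eqxx /=.
apply: connect_homo c_ab => x y /existsP[i /andP[_ e_xy]].
have ij : j * size (edges G) + i < size (edges (glue G)).
  by rewrite size_edges_glue copy_index_lt.
apply/existsP; exists (Ordinal ij); rewrite inE /= nth_edges_glue //.
by case/orP: e_xy => /andP[/eqP -> /eqP ->]; rewrite !eqxx ?orbT.
Qed.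

End Glue.

Lemma outmost_linked_glue G : outmost_linked G -> outmost_linked (glue G).
Proof.
case/and5P=> ht hl hr tl lr; rewrite /outmost_linked.
have merge_top1 : glue_relabel G (1 * nv G + vtop G) = glue_relabel G (0 * nv G + vleft G).
  by rewrite /glue_relabel mul0n add0n (glue_merge_id hl) /glue_merge mul1n eqxx.
have merge_top2 : glue_relabel G (2 * nv G + vtop G) = glue_relabel G (0 * nv G + vright G).
  rewrite /glue_relabel mul0n add0n (glue_merge_id hr) /glue_merge ifN_eqC ?eqxx //.
  by apply/eqP; lia.
have -> : vtop (glue G) = glue_relabel G (0 * nv G + vtop G) by [].
have -> : vleft (glue G) = glue_relabel G (1 * nv G + vleft G) by rewrite mul1n.
have -> : vright (glue G) = glue_relabel G (2 * nv G + vright G) by [].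
rewrite !glue_relabel_lt ?copy_index_lt //=.
apply/andP; split.
  apply: linked_trans (linked_glue_copy (j := 0) isT tl) _.
  by rewrite -merge_top1; apply: linked_glue_copy.
apply: linked_trans (linked_glue_copy (j := 1) isT (linked_sym tl)) _.
rewrite merge_top1; apply: linked_trans (linked_glue_copy (j := 0) isT lr) _.
by rewrite -merge_top2; apply: linked_glue_copy (linked_trans tl lr).
Qed.

Lemma outmost_linked_triangle : outmost_linked triangle.
Proof.
apply/and5P; split => //.
  apply/existsP; exists (@Ordinal 3 0 isT); apply/existsP; exists (@Ordinal 3 1 isT).
  by apply: connect1; apply/existsP; exists (@Ordinal 3 0 isT); rewrite inE.
apply/existsP; exists (@Ordinal 3 1 isT); apply/existsP; exists (@Ordinal 3 2 isT).
by apply: connect1; apply/existsP; exists (@Ordinal 3 1 isT); rewrite inE.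
Qed.

Lemma outmost_linked_Gamma n : outmost_linked (Gamma n).
Proof.
by rewrite /Gamma; elim: n.-1 => [|k IHk]; [exact: outmost_linked_triangle | exact: outmost_linked_glue].
Qed.

Local Open Scope ring_scope.

(* [Gamma 0] is the triangle as well. *)
Theorem lemma3p3 (n : nat) : (1 <= n)%N ->
  (exists Q : Zxy, T1 n = (xv - 1) * Q) /\
  (exists Q : Zxy, T0 n = (xv - 1) ^+ 2 * Q).
Proof.
move=> _; have linkedG := outmost_linked_Gamma n.
by split; [exact: T1sum_divisible | exact: T0sum_divisible].
Qed.
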